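(* Let $\mathcal C$ be a cartesian closed category with regular epi-mono factorizations, $S$ an object, and $T$ the state monad on $S$. For every $T$-algebra $(X,h)$, with $Y=L(X,h)$, the morphism $e_X^*:X\to Y^S$ is a morphism of $T$-algebras from $(X,h)$ to $(Y^S,\epsilon_Y^S)$, i.e. $e_X^*\circ h=\epsilon_Y^S\circ T(e_X^* )$.
   Context: $U(X)=X^S$, $F(X)=S\times X$, $F\dashv U$, $T=UF$, $TX=(S\times X)^S$. For $f:S\times X\to Z$, $f^*:X\to Z^S$ is its transpose. $\epsilon_Z:S\times Z^S\to Z$ is the counit (evaluation), $\eta_X=(\mathrm{id}_{S\times X})^*$, $\mu_X=(\epsilon_{S\times X})^S$; $q_X:S\times X\to X$ is the second projection. A $T$-algebra is $(X,h)$, $h:TX\to X$, with $h\circ Th=h\circ\mu_X$, $h\circ\eta_X=\mathrm{id}_X$; a morphism $(X,h)\to(X',h')$ is $u:X\to X'$ with $h'\circ Tu=u\circ h$. For a $T$-algebra $(X,h)$, $f_X=h\circ q_{S\times X}^*:S\times X\to X$ is factored as $f_X=m_X\circ e_X$ with $e_X:S\times X\to Y$ a regular epimorphism and $m_X:Y\to X$ a monomorphism; $Y=L(X,h)$ and $e_X^*:X\to Y^S$ is the transpose of $e_X$. *)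

Set Implicit Arguments.
Unset Strict Implicit.

Record CCC : Type := {
  ob :> Type;
  hom : ob -> ob -> Type;
  idm : forall A, hom A A;
  comp : forall A B C, hom B C -> hom A B -> hom A C;
  comp_assoc : forall A B C D (h : hom C D) (g : hom B C) (f : hom A B),
      comp h (comp g f) = comp (comp h g) f;
  comp_id_l : forall A B (f : hom A B), comp (idm B) f = f;
  comp_id_r : forall A B (f : hom A B), comp f (idm A) = f;
  term : ob;
  to_term : forall A, hom A term;
  to_term_uniq : forall A (f g : hom A term), f = g;
  prod : ob -> ob -> ob;
  pr1 : forall A B, hom (prod A B) A;
  pr2 : forall A B, hom (prod A B) B;
  pairing : forall X A B, hom X A -> hom X B -> hom X (prod A B);
  pr1_pair : forall X A B (f : hom X A) (g : hom X B), comp (pr1 A B) (pairing f g) = f;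
  pr2_pair : forall X A B (f : hom X A) (g : hom X B), comp (pr2 A B) (pairing f g) = g;
  pair_uniq : forall X A B (h : hom X (prod A B)),
      pairing (comp (pr1 A B) h) (comp (pr2 A B) h) = h;
  (* exponentials: expo B Z = Z^B, with evaluation S x Z^S -> Z *)
  expo : ob -> ob -> ob;
  ev : forall B Z, hom (prod B (expo B Z)) Z;
  curry : forall B X Z, hom (prod B X) Z -> hom X (expo B Z);
  ev_curry : forall B X Z (f : hom (prod B X) Z),
      comp (ev B Z) (pairing (pr1 B X) (comp (curry f) (pr2 B X))) = f;
  curry_uniq : forall B X Z (g : hom X (expo B Z)),
      curry (comp (ev B Z) (pairing (pr1 B X) (comp g (pr2 B X)))) = g
}.

Arguments hom {c} _ _.
Arguments idm {c} A.
Arguments comp {c A B C} _ _.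
Arguments term {c}.
Arguments prod {c} _ _.
Arguments pr1 {c} A B.
Arguments pr2 {c} A B.
Arguments pairing {c X A B} _ _.
Arguments expo {c} _ _.
Arguments ev {c} B Z.
Arguments curry {c B X Z} _.

Section Defs.
Variable C : CCC.

Definition prodmap {A A' B B' : C} (f : hom A A') (g : hom B B') :
  hom (prod A B) (prod A' B') :=
  pairing (comp f (pr1 A B)) (comp g (pr2 A B)).

Definition mono {A B : C} (m : hom A B) : Prop :=
  forall (Z : C) (g h : hom Z A), comp m g = comp m h -> g = h.

Definition regular_epi {A B : C} (e : hom A B) : Prop :=
  exists (K : C) (u v : hom K A),
    comp e u = comp e v /\
    forall (Z : C) (w : hom A Z), comp w u = comp w v ->
      exists k : hom B Z, comp k e = w /\
        forall k' : hom B Z, comp k' e = w -> k' = k.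

Definition has_reg_epi_mono_factorizations : Prop :=
  forall (A B : C) (f : hom A B),
    exists (Y : C) (e : hom A Y) (m : hom Y B),
      regular_epi e /\ mono m /\ f = comp m e.

Variable S : C.

Definition Fo (X : C) : C := prod S X.
Definition Uo (X : C) : C := expo S X.
Definition To (X : C) : C := Uo (Fo X).

Definition transp {X Z : C} (f : hom (prod S X) Z) : hom X (expo S Z) := curry f.

Definition eps (Z : C) : hom (prod S (expo S Z)) Z := ev S Z.

Definition expmap {A B : C} (g : hom A B) : hom (expo S A) (expo S B) :=
  transp (comp g (eps A)).

Definition Ffun {X Z : C} (f : hom X Z) : hom (Fo X) (Fo Z) := prodmap (idm S) f.
Definition Ufun {X Z : C} (f : hom X Z) : hom (Uo X) (Uo Z) := expmap f.
Definition Tfun {X Z : C} (f : hom X Z) : hom (To X) (To Z) := Ufun (Ffun f).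

Definition eta (X : C) : hom X (To X) := transp (idm (prod S X)).
Definition mu (X : C) : hom (To (To X)) (To X) := expmap (eps (prod S X)).

Definition q (X : C) : hom (prod S X) X := pr2 S X.

Definition is_T_algebra (X : C) (h : hom (To X) X) : Prop :=
  comp h (Tfun h) = comp h (mu X) /\ comp h (eta X) = idm X.

Definition is_T_alg_morphism (X X' : C) (h : hom (To X) X) (h' : hom (To X') X')
  (u : hom X X') : Prop :=
  comp h' (Tfun u) = comp u h.

Definition fX (X : C) (h : hom (To X) X) : hom (prod S X) X :=
  comp h (transp (q (prod S X))).

End Defs.

Arguments prodmap {C A A' B B'} f g.
Arguments mono {C A B} m.
Arguments regular_epi {C A B} e.
Arguments transp {C S X Z} f.
Arguments Tfun {C S X Z} f.
Arguments is_T_alg_morphism {C} S {X X'} h h' u.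
Arguments is_T_algebra {C} S {X} h.
Arguments expmap {C} S {A B} g.
Arguments eps {C} S Z.
Arguments fX {C} S {X} h.


(* Transposing along S x - -| (-)^S, the maps f_X o (S x h) and f_X o eps_{S x X}
   correspond to h o Th o q^* and h o mu o q^*, which agree by the multiplication
   law.  As m is monic, e also identifies S x h with eps_{S x X}, and this is
   exactly what makes e^* an algebra morphism: e^* o h is the transpose of
   e o (S x h), while eps_Y^S o T e^* is the transpose of e o eps_{S x X}. *)

Section CartesianClosed.
Variable C : CCC.

Lemma prod_ext (X A B : C) (a b : hom X (prod A B)) :
  comp (pr1 A B) a = comp (pr1 A B) b -> comp (pr2 A B) a = comp (pr2 A B) b -> a = b.
Proof.
  intros H1 H2. rewrite <- (pair_uniq a), <- (pair_uniq b), H1, H2. reflexivity.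
Qed.

Lemma pr1_prodmap (A A' B B' : C) (f : hom A A') (g : hom B B') :
  comp (pr1 A' B') (prodmap f g) = comp f (pr1 A B).
Proof. apply pr1_pair. Qed.

Lemma pr2_prodmap (A A' B B' : C) (f : hom A A') (g : hom B B') :
  comp (pr2 A' B') (prodmap f g) = comp g (pr2 A B).
Proof. apply pr2_pair. Qed.

Lemma prodmap_comp (A A' A'' B B' B'' : C) (f : hom A' A'') (g : hom B' B'')
  (f' : hom A A') (g' : hom B B') :
  comp (prodmap f g) (prodmap f' g') = prodmap (comp f f') (comp g g').
Proof.
  apply prod_ext.
  - rewrite comp_assoc, !pr1_prodmap, <- comp_assoc, pr1_prodmap, comp_assoc.
    reflexivity.
  - rewrite comp_assoc, !pr2_prodmap, <- comp_assoc, pr2_prodmap, comp_assoc.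
    reflexivity.
Qed.

Lemma prodmap_idl_comp (S A B D : C) (a : hom B D) (b : hom A B) :
  prodmap (idm S) (comp a b) = comp (prodmap (idm S) a) (prodmap (idm S) b).
Proof. rewrite prodmap_comp, comp_id_l. reflexivity. Qed.

Lemma prodmap_idl (S X Z : C) (g : hom X Z) :
  prodmap (idm S) g = pairing (pr1 S X) (comp g (pr2 S X)).
Proof. unfold prodmap. rewrite comp_id_l. reflexivity. Qed.

Lemma ev_prodmap_curry (S X Z : C) (f : hom (prod S X) Z) :
  comp (ev S Z) (prodmap (idm S) (curry f)) = f.
Proof. rewrite prodmap_idl. apply ev_curry. Qed.

Lemma curry_ext (S X Z : C) (a b : hom X (expo S Z)) :
  comp (ev S Z) (prodmap (idm S) a) = comp (ev S Z) (prodmap (idm S) b) -> a = b.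
Proof.
  intro H. rewrite <- (curry_uniq a), <- (curry_uniq b), <- !prodmap_idl, H.
  reflexivity.
Qed.

Lemma curry_comp (S X X' Z : C) (f : hom (prod S X) Z) (g : hom X' X) :
  comp (curry f) g = curry (comp f (prodmap (idm S) g)).
Proof.
  apply curry_ext.
  rewrite ev_prodmap_curry, prodmap_idl_comp, comp_assoc, ev_prodmap_curry.
  reflexivity.
Qed.

End CartesianClosed.

Section StateMonad.
Variables (C : CCC) (S : C).

Lemma Tfun_transp_q (A B : C) (f : hom A B) :
  comp (Tfun f) (transp (q S (prod S A)))
  = comp (transp (q S (prod S B))) (prodmap (idm S) f).
Proof.
  unfold Tfun, Ufun, Ffun, expmap, transp, q, eps, To, Uo, Fo.
  rewrite !curry_comp, <- comp_assoc, ev_prodmap_curry, pr2_prodmap.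
  reflexivity.
Qed.

Lemma mu_transp_q (X : C) :
  comp (mu S X) (transp (q S (prod S (To S X))))
  = comp (transp (q S (prod S X))) (eps S (prod S X)).
Proof.
  unfold mu, expmap, transp, q, eps, To, Uo, Fo.
  rewrite !curry_comp, <- comp_assoc, ev_prodmap_curry, pr2_prodmap.
  reflexivity.
Qed.

Lemma fX_coequalizes (X : C) (h : hom (To S X) X)
  (h_mult : comp h (Tfun h) = comp h (mu S X)) :
  comp (fX S h) (prodmap (idm S) h) = comp (fX S h) (eps S (prod S X)).
Proof.
  unfold fX.
  rewrite <- !comp_assoc, <- Tfun_transp_q, <- mu_transp_q, !comp_assoc, h_mult.
  reflexivity.
Qed.

Lemma expmap_eps_Tfun_transp (X Z : C) (f : hom (prod S X) Z) :
  comp (expmap S (eps S Z)) (Tfun (transp f)) = transp (comp f (eps S (prod S X))).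
Proof.
  apply curry_ext.
  unfold Tfun, Ufun, Ffun, expmap, transp, eps, Fo.
  rewrite prodmap_idl_comp, comp_assoc, !ev_prodmap_curry, <- comp_assoc,
    ev_prodmap_curry, comp_assoc, ev_prodmap_curry.
  reflexivity.
Qed.

Lemma transp_T_alg_morphism (X Y : C) (h : hom (To S X) X) (e : hom (prod S X) Y)
  (e_coeq : comp e (prodmap (idm S) h) = comp e (eps S (prod S X))) :
  is_T_alg_morphism S h (expmap S (eps S Y)) (transp e).
Proof.
  unfold is_T_alg_morphism.
  etransitivity; [apply expmap_eps_Tfun_transp |].
  rewrite <- e_coeq.
  unfold transp. rewrite curry_comp.
  reflexivity.
Qed.

End StateMonad.

Theorem mainTheorem9 (C : CCC) (HC : has_reg_epi_mono_factorizations C)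
  (S X : C) (h : hom (To S X) X) (Halg : is_T_algebra S h)
  (Y : C) (e : hom (prod S X) Y) (m : hom Y X)
  (He : regular_epi e) (Hm : mono m) (Hfact : fX S h = comp m e) :
  is_T_alg_morphism S h (expmap S (eps S Y)) (transp e).
Proof.
  destruct Halg as [h_mult _].
  apply transp_T_alg_morphism, Hm.
  rewrite !comp_assoc, <- Hfact.
  apply fX_coequalizes, h_mult.
Qed.
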